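(* Let $X$ be a finite $T_0$ topological space and $\mathcal V$ a multivector field on $X$ with $X$ invariant. Let $S_1,S_2\subset X$ be isolated invariant sets. There exists a link $\gamma$ from $S_1$ to $S_2$ if and only if there exists a path $\rho:[a,b]\cap\mathbb Z\to X$ with $\rho(a)\in S_1$ and $\rho(b)\in S_2$.
   Context: Notation: $\operatorname{cl}$ is closure; $A\subset X$ is locally closed if $\operatorname{cl}A\setminus A$ is closed. A multivector field $\mathcal V$ on $X$ is a partition of $X$ into locally closed sets (multivectors); $[x]_{\mathcal V}$ is the multivector containing $x$. A multivector $V$ is critical if $H(\operatorname{cl}V,\operatorname{cl}V\setminus V)$ (relative singular homology) is nontrivial, regular otherwise. $A$ is $\mathcal V$-compatible if it is a union of multivectors; $\langle A\rangle_{\mathcal V}$ is the smallest locally closed $\mathcal V$-compatible set containing $A$. $\Pi_{\mathcal V}(x)=\operatorname{cl}\{x\}\cup[x]_{\mathcal V}$. A solution is a partial map $\gamma:\mathbb Z\nrightarrow X$ with domain an integer interval and $\gamma(t+1)\in\Pi_{\mathcal V}(\gamma(t))$ whenever $t,t+1\in\operatorname{dom}\gamma$; a path is a solution with finite domain; a full solution has domain $\mathbb Z$. $\alpha(\gamma)=\langle\bigcap_{t\le0}\gamma((-\infty,t])\rangle_{\mathcal V}$, $\omega(\gamma)=\langle\bigcap_{t\ge0}\gamma([t,\infty))\rangle_{\mathcal V}$. A full solution is essential unless $\alpha(\gamma)$ or $\omega(\gamma)$ lies in a single regular multivector. $\operatorname{Inv}S$ is the set of $x\in S$ with an essential solution $\gamma$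 with image in $S$ and $\gamma(0)=x$; $S$ is invariant if $\operatorname{Inv}S=S$. An invariant $S$ is isolated invariant if there is a closed $N\supset\Pi_{\mathcal V}(S)$ such that every path in $N$ with endpoints in $S$ has image in $S$. A link from $S_1$ to $S_2$ is a full solution $\gamma$ with $\alpha(\gamma)\cap S_1\ne\emptyset\ne\omega(\gamma)\cap S_2$. *)

From mathcomp Require Import all_boot all_order all_algebra.
From mathcomp Require Import all_classical all_reals all_analysis.
From mathcomp Require Import Rstruct Rstruct_topology.

Set Implicit Arguments.
Unset Strict Implicit.
Unset Printing Implicit Defensive.

Import Order.TTheory GRing.Theory Num.Theory.
Local Open Scope classical_set_scope.
Local Open Scope ring_scope.

(* Relative singular homology (integer coefficients) of a pair of subsets    *)
(* (Y, A), A ⊆ Y ⊆ X, of a topological space X, each carrying the subspace   *)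
(* topology.  A singular n-simplex in Y is a map from the standard n-simplex *)
(* Δ^n ⊂ R^{n+1} (a row vector of reals) to X which is continuous on Δ^n     *)
(* and maps Δ^n into Y; two such maps are identified when they agree on Δ^n. *)

Notation RR := Rdefinitions.R.

Definition std_simplex (n : nat) : set 'rV[RR]_n.+1 :=
  [set t | (forall i, 0 <= t ord0 i) /\ \sum_(i < n.+1) t ord0 i = 1].
Arguments std_simplex : clear implicits.

Definition simp (X : Type) (n : nat) := 'rV[RR]_n.+1 -> X.

Definition singular_in (X : topologicalType) (Y : set X) (n : nat)
  (s : simp X n) : Prop :=
  {within std_simplex n, continuous s} /\ (forall t, std_simplex n t -> Y (s t)).

Definition simp_eq (X : Type) (n : nat) (s s' : simp X n) : Prop :=
  forall t, std_simplex n t -> s t = s' t.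

Definition chain (X : Type) (n : nat) := seq (int * simp X n).

Definition chain_in (X : topologicalType) (Y : set X) (n : nat)
  (c : chain X n) : Prop :=
  forall k s, List.In (k, s) c -> singular_in Y s.

Definition coef (X : Type) (n : nat) (c : chain X n) (s : simp X n) : int :=
  \sum_(p <- c | `[< simp_eq p.2 s >]) p.1.

(* the i-th face map Δ^n -> Δ^(n+1) (insert a 0 coordinate at position i) *)
Definition face (n : nat) (i : 'I_n.+2) (t : 'rV[RR]_n.+1) : 'rV[RR]_n.+2 :=
  \row_(j < n.+2) (match unlift i j with Some k => t ord0 k | None => 0 end).

Definition bd (X : Type) (n : nat) (c : chain X n.+1) : chain X n :=
  flatten [seq [seq (((-1) ^+ i * p.1)%R, (fun t => p.2 (face i t)))
               | i : 'I_n.+2 <- enum 'I_n.+2] | p <- c].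

Definition rel_cycle (X : topologicalType) (Y A : set X) (n : nat) :
  chain X n -> Prop :=
  match n return chain X n -> Prop with
  | 0 => fun c => chain_in Y c
  | m.+1 => fun c => chain_in Y c /\
      forall s : simp X m, coef (bd c) s != 0 ->
        forall t, std_simplex m t -> A (s t)
  end.

Definition rel_boundary (X : topologicalType) (Y A : set X) (n : nat)
  (c : chain X n) : Prop :=
  exists (d : chain X n.+1) (a : chain X n),
    [/\ chain_in Y d, chain_in A a &
        forall s, coef c s = coef (bd d) s + coef a s].

Definition rel_homology_nontrivial_at (X : topologicalType) (Y A : set X)
  (n : nat) : Prop :=
  exists c : chain X n, rel_cycle Y A c /\ ~ rel_boundary Y A c.

Definition rel_homology_nontrivial (X : topologicalType) (Y A : set X) :=
  exists n, rel_homology_nontrivial_at Y A n.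

Section MV.
Variable X : topologicalType.

Definition locally_closed (A : set X) : Prop := closed (closure A `\` A).

Definition multivector_field (V : set (set X)) : Prop :=
  [/\ forall W, V W -> W !=set0,
      forall W, V W -> locally_closed W,
      forall x : X, exists W, V W /\ W x &
      forall W W', V W -> V W' -> W `&` W' !=set0 -> W = W'].

Definition mv_of (V : set (set X)) (x : X) : set X :=
  [set y | exists W, [/\ V W, W x & W y]].

Definition critical (V : set (set X)) (W : set X) : Prop :=
  rel_homology_nontrivial (closure W) (closure W `\` W).

Definition regular (V : set (set X)) (W : set X) : Prop := ~ critical V W.

Definition compatible (V : set (set X)) (A : set X) : Prop :=
  forall x, A x -> mv_of V x `<=` A.

Definition lc_hull (V : set (set X)) (A : set X) : set X :=
  \bigcap_(B in [set B | [/\ locally_closed B, compatible V B & A `<=` B]]) B.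

Definition Pi (V : set (set X)) (x : X) : set X := closure [set x] `|` mv_of V x.

Definition Pi_set (V : set (set X)) (S : set X) : set X :=
  \bigcup_(x in S) Pi V x.

Definition full_solution (V : set (set X)) (g : int -> X) : Prop :=
  forall t : int, Pi V (g t) (g (t + 1)).

Definition path_sol (V : set (set X)) (a b : int) (r : int -> X) : Prop :=
  a <= b /\ forall t : int, a <= t -> t < b -> Pi V (r t) (r (t + 1)).

Definition alpha_limit (V : set (set X)) (g : int -> X) : set X :=
  lc_hull V [set x | forall t : int, t <= 0 -> exists s, s <= t /\ g s = x].

Definition omega_limit (V : set (set X)) (g : int -> X) : set X :=
  lc_hull V [set x | forall t : int, 0 <= t -> exists s, t <= s /\ g s = x].

Definition essential (V : set (set X)) (g : int -> X) : Prop :=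
  full_solution V g /\
  ~ (exists W, [/\ V W, regular V W & alpha_limit V g `<=` W]) /\
  ~ (exists W, [/\ V W, regular V W & omega_limit V g `<=` W]).

Definition Inv (V : set (set X)) (S : set X) : set X :=
  [set x | S x /\ exists g, [/\ essential V g, (forall t, S (g t)) & g 0 = x]].

Definition invariant_set (V : set (set X)) (S : set X) : Prop := Inv V S = S.

Definition isolated_invariant (V : set (set X)) (S : set X) : Prop :=
  invariant_set V S /\
  exists N : set X, [/\ closed N, Pi_set V S `<=` N &
    forall a b r, path_sol V a b r -> (forall t, a <= t <= b -> N (r t)) ->
      S (r a) -> S (r b) -> forall t, a <= t <= b -> S (r t)].

Definition link (V : set (set X)) (S1 S2 : set X) (g : int -> X) : Prop :=
  full_solution V g /\ alpha_limit V g `&` S1 !=set0 /\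
  omega_limit V g `&` S2 !=set0.

End MV.

From mathcomp Require Import all_boot all_order all_algebra.
From mathcomp Require Import all_classical all_reals all_analysis.
From mathcomp Require Import zify.
From Stdlib Require Import Relations.

(* In a finite space a set is closed as soon as it contains the closure of
   each of its points.  Hence the set of points reachable from A along
   Pi-steps is closed, and the set of points from which A can be reached is
   open; both are locally closed and V-compatible, so they contain the
   hull <A>_V.  Thus every point of the alpha-limit set of a full solution
   reaches the past of the solution, and every point of its omega-limit set
   is reached from its future, which yields a path from alpha(g) to
   omega(g).  Conversely, a path frozen at both ends is a full solution
   whose alpha- and omega-limit sets contain its endpoints. *)

Set Implicit Arguments.
Unset Strict Implicit.

Local Open Scope classical_set_scope.
Local Open Scope ring_scope.
Import Order.TTheory GRing.Theory.

Lemma closure_set1_closed (X : topologicalType) (B : set X) :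
  finite_set [set: X] -> (forall x, B x -> closure [set x] `<=` B) -> closed B.
Proof.
move=> Xfin clB.
have -> : B = \bigcup_(x in B) closure [set x].
  apply/seteqP; split=> [x Bx|x [y By]]; last exact: clB.
  by exists x => //; apply: subset_closure.
apply: closed_bigcup => [|x _]; first exact: sub_finite_set Xfin.
exact: closed_closure.
Qed.

Lemma locally_closed_closed (X : topologicalType) (B : set X) :
  closed B -> locally_closed B.
Proof.
rewrite /locally_closed => /closure_id <-; rewrite setDv; exact: closed0.
Qed.

Lemma locally_closed_open (X : topologicalType) (B : set X) :
  open B -> locally_closed B.
Proof.
move=> oB; rewrite /locally_closed setDE.
by apply: closedI; [exact: closed_closure | rewrite closedC].
Qed.

Definition clamp (a b t : int) : int := Num.max a (Num.min b t).

Section Reachability.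
Variables (X : topologicalType) (V : set (set X)).

Definition reach : relation X := clos_refl_trans X (Pi V).

Definition reach_to (A : set X) : set X := [set x | exists2 u, A u & reach x u].

Definition reach_from (A : set X) : set X :=
  [set x | exists2 u, A u & reach u x].

Lemma Pi_refl x : Pi V x x.
Proof. by left; apply: subset_closure. Qed.

Lemma reach_closure x y : closure [set x] y -> reach x y.
Proof. by move=> xy; apply: rt_step; left. Qed.

Lemma mv_of_sym x y : mv_of V x y -> mv_of V y x.
Proof. by move=> [W [VW Wx Wy]]; exists W. Qed.

Lemma reach_mv x y : mv_of V x y -> reach x y.
Proof. by move=> xy; apply: rt_step; right. Qed.

Lemma lc_hull_sub A B :
  locally_closed B -> compatible V B -> A `<=` B -> lc_hull V A `<=` B.
Proof. by move=> lcB cB AB x; apply. Qed.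

Lemma sub_lc_hull A : A `<=` lc_hull V A.
Proof. by move=> x Ax B [_ _]; apply. Qed.

Lemma compatible_reach_to A : compatible V (reach_to A).
Proof.
move=> x [u Au xu] y /mv_of_sym/reach_mv yx.
by exists u => //; apply: rt_trans yx xu.
Qed.

Lemma compatible_reach_from A : compatible V (reach_from A).
Proof.
move=> x [u Au ux] y /reach_mv xy.
by exists u => //; apply: rt_trans ux xy.
Qed.

Lemma full_solution_reach g s s' :
  full_solution V g -> s <= s' -> reach (g s) (g s').
Proof.
move=> gsol ss'.
have -> : s' = s + `|s' - s|%N%:Z by rewrite gez0_abs; lia.
elim: `|s' - s|%N => [|n IH]; first by rewrite addr0; apply: rt_refl.
apply: rt_trans IH (rt_step _ _ _ _ _).
by have -> : s + n.+1%:Z = s + n%:Z + 1 by lia.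
Qed.

Lemma path_sol_snoc a b r y : path_sol V a b r -> Pi V (r b) y ->
  path_sol V a (b + 1) (fun t => if t <= b then r t else y).
Proof.
move=> [ab rsol] ry; split=> [|t ta tb1]; first lia.
have [tb|bt] := ltP t b.
  by rewrite ltW // ifT; [exact: rsol | lia].
have tb : t = b by lia.
by rewrite tb lexx ifF //; lia.
Qed.

Lemma reach_path x y : reach x y ->
  exists a b r, path_sol V a b r /\ r a = x /\ r b = y.
Proof.
move=> xy; elim: (clos_rt_rtn1 _ _ _ _ xy).
  by exists 0, 0, (fun _ => x); split=> //; split=> // t; lia.
move=> z w zw _ [a [b [r [rsol [<- rb]]]]].
exists a, (b + 1), (fun t => if t <= b then r t else w).
split; first by apply: path_sol_snoc rsol _; rewrite rb.
rewrite ifT; last by case: rsol.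
by split=> //; rewrite ifF //; lia.
Qed.

Section Clamp.
Variables (a b : int) (r : int -> X).
Hypothesis rsol : path_sol V a b r.

Lemma full_solution_clamp : full_solution V (r \o clamp a b).
Proof.
case: rsol => _ step t /=.
have clamp_step : clamp a b (t + 1) = clamp a b t \/
    clamp a b (t + 1) = clamp a b t + 1 /\ a <= clamp a b t < b.
  by rewrite /clamp; lia.
case: clamp_step => [->|[-> ct]]; first exact: Pi_refl.
by apply: step; lia.
Qed.

Lemma alpha_limit_clamp : alpha_limit V (r \o clamp a b) (r a).
Proof.
apply: sub_lc_hull => t _; exists (Num.min t a); split=> /=; first lia.
by congr r; rewrite /clamp; lia.
Qed.

Lemma omega_limit_clamp : omega_limit V (r \o clamp a b) (r b).
Proof.
apply: sub_lc_hull => t _; exists (Num.max t b); split=> /=; first lia.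
by case: rsol => ab _; congr r; rewrite /clamp; lia.
Qed.

End Clamp.

Hypothesis Xfin : finite_set [set: X].

Lemma lc_hull_sub_reach_to A : lc_hull V A `<=` reach_to A.
Proof.
apply: lc_hull_sub; last by move=> x Ax; exists x => //; apply: rt_refl.
- apply: locally_closed_open; rewrite -closedC.
  apply: closure_set1_closed => // x Bx y /reach_closure xy [u Au yu].
  by apply: Bx; exists u => //; apply: rt_trans xy yu.
- exact: compatible_reach_to.
Qed.

Lemma lc_hull_sub_reach_from A : lc_hull V A `<=` reach_from A.
Proof.
apply: lc_hull_sub; last by move=> x Ax; exists x => //; apply: rt_refl.
- apply: locally_closed_closed.
  apply: closure_set1_closed => // x [u Au ux] y /reach_closure xy.
  by exists u => //; apply: rt_trans ux xy.
- exact: compatible_reach_from.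
Qed.

Lemma alpha_limit_reach g p :
  alpha_limit V g p -> exists2 s, s <= 0 & reach p (g s).
Proof. by move=> /lc_hull_sub_reach_to [u /(_ 0 (lexx _)) [s [s0 <-]]]; exists s. Qed.

Lemma omega_limit_reach g q :
  omega_limit V g q -> exists2 s, 0 <= s & reach (g s) q.
Proof. by move=> /lc_hull_sub_reach_from [u /(_ 0 (lexx _)) [s [s0 <-]]]; exists s. Qed.

End Reachability.

Theorem proposition4p2 (X : topologicalType)
  (Xfin : finite_set [set: X]) (XT0 : @kolmogorov_space X)
  (V : set (set X)) (HV : multivector_field V)
  (Xinv : invariant_set V [set: X])
  (S1 S2 : set X)
  (HS1 : isolated_invariant V S1) (HS2 : isolated_invariant V S2) :
  (exists g : int -> X, link V S1 S2 g) <->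
  (exists (a b : int) (r : int -> X),
      path_sol V a b r /\ S1 (r a) /\ S2 (r b)).
Proof.
split.
- move=> [g [gsol [[p [alpha_p S1p]] [q [omega_q S2q]]]]].
  have [s1 s1_le0 p_s1] := alpha_limit_reach Xfin alpha_p.
  have [s2 s2_ge0 s2_q] := omega_limit_reach Xfin omega_q.
  have p_q : reach V p q.
    apply: rt_trans p_s1 _; apply: rt_trans _ s2_q.
    exact: full_solution_reach gsol (le_trans s1_le0 s2_ge0).
  have [a [b [r [rsol [ra rb]]]]] := reach_path p_q.
  by exists a, b, r; rewrite ra rb.
- move=> [a [b [r [rsol [S1a S2b]]]]].
  exists (r \o clamp a b); split; first exact: full_solution_clamp.
  by split; [exists (r a) | exists (r b)];
    split=> //; [exact: alpha_limit_clamp | exact: omega_limit_clamp].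
Qed.
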